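(* Let $R\ge 1$, let $q^{CAV}_1,\dots,q^{CAV}_R\ge 0$ be route flows with $q^{CAV}=\sum_r q^{CAV}_r>0$, let $t^{CAV}_1,\dots,t^{CAV}_R>0$ be route travel times, and let $(I,di)$ be the space of drivers with total mass $|I|=q^{CAV}$. Then: (i) Every assignment plan $\mu$ defines an offer profile, namely $T^{CAV}_i:=\sum_r t^{CAV}_r\mu(i,r)$. (ii) If $R=2$, then every offer profile $T^{CAV}$ is feasible. Moreover, if $t^{CAV}_1\neq t^{CAV}_2$, the assignment plan inducing $T^{CAV}$ is unique (up to $di$-almost everywhere equality). (iii) If $R\ge 3$, then not every offer profile need be feasible: there exist flows and travel times with three routes and an offer profile subject to them which is not feasible.
   Context: Drivers are indexed by a measure space $(I,di)$ with total mass $|I|=q^{CAV}$: either infinitesimal drivers ($I$ an interval with Lebesgue measure) or atomic drivers ($I=\{1,\dots,q^{CAV}\}$ with counting measure). Given flows $\mathbf q^{CAV}=(q^{CAV}_1,\dots,q^{CAV}_R)$ and travel times $\mathbf t^{CAV}=(t^{CAV}_1,\dots,t^{CAV}_R)$, an offer profile subject to $(\mathbf q^{CAV},\mathbf t^{CAV})$ is a measurable function $T^{CAV}:I\to[\min_r t^{CAV}_r,\max_r t^{CAV}_r]$ with $\frac1{|I|}\int_I T^{CAV}_i\,di=\frac1{q^{CAV}}\sum_r q^{CAV}_r t^{CAV}_r$. An assignment plan inducing $T^{CAV}$ is a measurable $\mu:I\times\{1,\dots,R\}\to[0,1]$ such that $\int_I\mu(i,r)\,di=q^{CAV}_r$ for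 every $r$, $\sum_r\mu(i,r)=1$ for a.e. $i$, and $\sum_r t^{CAV}_r\mu(i,r)=T^{CAV}_i$ for a.e. $i$. An offer profile is feasible if it is induced by at least one assignment plan. *)

From HB Require Import structures.
From mathcomp Require Import all_boot all_order all_algebra.
From mathcomp Require Import all_classical all_reals all_analysis.
Set Implicit Arguments. Unset Strict Implicit. Unset Printing Implicit Defensive.
Import Order.TTheory GRing.Theory Num.Theory.
Local Open Scope classical_set_scope.
Local Open Scope ring_scope.

(* Drivers live in a subset I of the real line (the type measurableTypeR R,
   i.e. R with its Borel sigma-algebra), equipped with a measure m ("di").
   Either I is an interval with Lebesgue measure (infinitesimal drivers), or
   I = {1,...,n} with the counting measure (atomic drivers). *)
Definition driver_space (R : realType) (q : R) (I : set (measurableTypeR R))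
  (m : {measure set (measurableTypeR R) -> \bar R}) : Prop :=
  ((is_interval I /\ (m = lebesgue_measure :> (set (measurableTypeR R) -> \bar R)))
   \/ (exists n : nat, I = [set (k%:R : R) | k in [set k : nat | (1 <= k <= n)%N]]
         /\ (m = counting :> (set (measurableTypeR R) -> \bar R))))
  /\ m I = q%:E.

(* Routes are indexed by 'I_n.+1 (so there are R = n+1 >= 1 routes). *)
Definition tmin (R : realType) (n : nat) (t : 'I_n.+1 -> R) : R :=
  \big[Num.min/t ord0]_(r < n.+1) t r.
Definition tmax (R : realType) (n : nat) (t : 'I_n.+1 -> R) : R :=
  \big[Num.max/t ord0]_(r < n.+1) t r.

Definition total_flow (R : realType) (n : nat) (qv : 'I_n.+1 -> R) : R :=
  \sum_(r < n.+1) qv r.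

Definition flows_times (R : realType) (n : nat) (qv tv : 'I_n.+1 -> R) : Prop :=
  (forall r, 0 <= qv r) /\ 0 < total_flow qv /\ (forall r, 0 < tv r).

(* Functions are taken on the
   whole real line; only their values on I matter.  The range condition is
   required m-almost everywhere on I (functions are considered up to
   di-a.e. equality). *)
Definition offer_profile (R : realType) (n : nat) (qv tv : 'I_n.+1 -> R)
  (I : set (measurableTypeR R)) (m : {measure set (measurableTypeR R) -> \bar R})
  (T : measurableTypeR R -> R) : Prop :=
  measurable_fun I T /\
  {ae m, forall i, I i -> tmin tv <= T i <= tmax tv} /\
  (((fine (m I))^-1)%:E * \int[m]_(i in I) (T i)%:E
     = ((total_flow qv)^-1 * \sum_(r < n.+1) qv r * tv r)%:E)%E.

Definition assignment_plan (R : realType) (n : nat) (qv : 'I_n.+1 -> R)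
  (I : set (measurableTypeR R)) (m : {measure set (measurableTypeR R) -> \bar R})
  (mu : measurableTypeR R -> 'I_n.+1 -> R) : Prop :=
  (forall r, measurable_fun I (fun i => mu i r)) /\
  (forall i, I i -> forall r, 0 <= mu i r <= 1) /\
  (forall r, (\int[m]_(i in I) (mu i r)%:E = (qv r)%:E)%E) /\
  {ae m, forall i, I i -> \sum_(r < n.+1) mu i r = 1}.

Definition induces (R : realType) (n : nat) (tv : 'I_n.+1 -> R)
  (I : set (measurableTypeR R)) (m : {measure set (measurableTypeR R) -> \bar R})
  (mu : measurableTypeR R -> 'I_n.+1 -> R) (T : measurableTypeR R -> R) : Prop :=
  {ae m, forall i, I i -> \sum_(r < n.+1) tv r * mu i r = T i}.

Definition feasible (R : realType) (n : nat) (qv tv : 'I_n.+1 -> R)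
  (I : set (measurableTypeR R)) (m : {measure set (measurableTypeR R) -> \bar R})
  (T : measurableTypeR R -> R) : Prop :=
  exists mu, assignment_plan qv I m mu /\ induces tv I m mu T.

From HB Require Import structures.
From mathcomp Require Import all_boot all_order all_algebra.
From mathcomp Require Import all_classical all_reals all_analysis.
From mathcomp Require Import measurable_realfun ring lra.
Set Implicit Arguments.
Unset Strict Implicit.
Unset Printing Implicit Defensive.

Import Order.TTheory GRing.Theory Num.Theory.
Local Open Scope classical_set_scope.
Local Open Scope ring_scope.

(* Pointwise an induced offer is a convex combination of the route times, and
   integrating the plan route by route shows that its mean is the flow-weighted
   mean time (i).  With two routes of different times, the shares of a driver
   are the barycentric coordinates of its offer in [t_1, t_2]; being affine in
   the offer, they integrate to the route flows exactly because the offer has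
   the prescribed mean, which gives existence and uniqueness (ii).  Equal times
   force an a.e. constant offer, served by the proportional split q_r / q.
   With three routes this breaks down (iii): for two drivers, route times
   1, 2, 3 and all flow on the middle route, the offers 1 and 3 have the right
   mean 2, but a route without flow carries no driver, so driver 1 would have to
   be offered 2. *)

Lemma driver_space_measurable (R : realType) (q : R) (I : set (measurableTypeR R))
    (m : {measure set (measurableTypeR R) -> \bar R}) :
  driver_space q I m -> measurable I.
Proof.
move=> [[[iI _]|[n [-> _]]] _]; first exact: is_interval_measurable.
apply: countable_measurable; first by move=> t; exact: measurable_set1.
exact: sub_countable (card_image_le _ _) (countableP _).
Qed.

Lemma bounded_integrable (R : realType) d (T : measurableType d)
    (mu : {measure set T -> \bar R}) (D : set T) (f : T -> R) (lo hi : R) :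
  measurable D -> (mu D < +oo)%E -> measurable_fun D f ->
  (forall x, D x -> lo <= f x <= hi) -> mu.-integrable D (fun x => (f x)%:E).
Proof.
move=> mD Dfin mf f_bnd; apply: measurable_bounded_integrable => //.
exists (`|lo| + `|hi|); split; first exact: num_real.
move=> M ltM x /f_bnd /andP[lof fhi]; rewrite /= ler_norml.
have := ler_norm lo; have := ler_norm (- lo); have := ler_norm hi; have := ler_norm (- hi).
rewrite !normrN => *; apply/andP; split; lra.
Qed.

Lemma integral_affine (R : realType) d (T : measurableType d)
    (mu : {measure set T -> \bar R}) (D : set T) (f : T -> R) (c e F Q : R) :
  measurable D -> mu D = Q%:E -> mu.-integrable D (fun x => (f x)%:E) ->
  (\int[mu]_(x in D) (f x)%:E = F%:E)%E ->
  (\int[mu]_(x in D) (c * f x + e)%:E = (c * F + e * Q)%:E)%E.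
Proof.
move=> mD DQ intf intfE.
have inte : mu.-integrable D (fun=> e%:E).
  by apply/integrableP; split=> //; rewrite integral_cst // DQ -EFinM ltry.
under eq_integral do rewrite EFinD EFinM.
rewrite integralD //; last exact: integrableZl.
by rewrite integralZl // intfE integral_cst // DQ -!EFinM -EFinD.
Qed.

Lemma mulEFinV_eq (R : realType) (q S : R) (X : \bar R) : q != 0 ->
  ((q^-1)%:E * X = (q^-1 * S)%:E)%E <-> X = S%:E.
Proof.
move=> q0; split=> [h|->]; last by rewrite EFinM.
by rewrite -[X]mul1e -(divff q0) EFinM -muleA h -EFinM mulrA divff // mul1r.
Qed.

Lemma tmin_le (R : realType) n (t : 'I_n.+1 -> R) r : tmin t <= t r.
Proof. exact: bigmin_le. Qed.

Lemma le_tmax (R : realType) n (t : 'I_n.+1 -> R) r : t r <= tmax t.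
Proof. exact: le_bigmax. Qed.

Lemma convex_comb_in_trange (R : realType) n (t w : 'I_n.+1 -> R) :
  (forall r, 0 <= w r) -> \sum_r w r = 1 ->
  tmin t <= \sum_r t r * w r <= tmax t.
Proof.
move=> w_ge0 w_sum1; apply/andP; split.
- rewrite -[tmin t]mulr1 -w_sum1 mulr_sumr; apply: ler_sum => r _.
  exact: ler_wpM2r (w_ge0 r) _ _ (tmin_le t r).
- rewrite -[tmax t]mulr1 -w_sum1 mulr_sumr; apply: ler_sum => r _.
  exact: ler_wpM2r (w_ge0 r) _ _ (le_tmax t r).
Qed.

Section AssignmentPlan.
Context {R : realType} {n : nat} {qv : 'I_n.+1 -> R} {I : set (measurableTypeR R)}
  {m : {measure set (measurableTypeR R) -> \bar R}}
  {mu : measurableTypeR R -> 'I_n.+1 -> R}.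
Hypotheses (mI : measurable I) (plan_mu : assignment_plan qv I m mu).

Lemma assignment_plan_integrable r : m.-integrable I (fun i => (mu i r)%:E).
Proof.
have [mmu [mu01 [mu_int _]]] := plan_mu.
apply/integrableP; split; first exact/measurable_EFinP.
rewrite (eq_integral (fun i => (mu i r)%:E)) ?mu_int ?ltry// => x /set_mem Ix.
by rewrite gee0_abs // lee_fin; case/andP: (mu01 x Ix r).
Qed.

Lemma integral_assignment_plan (c : 'I_n.+1 -> R) :
  (\int[m]_(i in I) (\sum_r c r * mu i r)%:E = (\sum_r c r * qv r)%:E)%E.
Proof.
have [_ [_ [mu_int _]]] := plan_mu.
under eq_integral do rewrite -sumEFin.
rewrite integral_sum // => [|r]; last first.
  by under eq_fun do rewrite EFinM; exact: integrableZl (assignment_plan_integrable r).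
rewrite -sumEFin; apply: eq_bigr => r _.
under eq_integral do rewrite EFinM.
by rewrite integralZl ?mu_int// assignment_plan_integrable.
Qed.

End AssignmentPlan.

Lemma assignment_plan_offer_profile (R : realType) n (qv tv : 'I_n.+1 -> R)
    (I : set (measurableTypeR R)) (m : {measure set (measurableTypeR R) -> \bar R}) mu :
  0 < total_flow qv -> driver_space (total_flow qv) I m ->
  assignment_plan qv I m mu ->
  offer_profile qv tv I m (fun i => \sum_r tv r * mu i r).
Proof.
move=> Q_gt0 D plan_mu; have mI := driver_space_measurable D.
have [mmu [mu01 [_ mu_sum1]]] := plan_mu.
split; [|split].
- apply: measurable_sum => r; exact: measurable_funM (measurable_cst _) (mmu r).
- apply: filterS mu_sum1 => x sum1 Ix.
  by apply: convex_comb_in_trange (sum1 Ix) => r; case/andP: (mu01 x Ix r).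
- rewrite D.2 /=; apply/mulEFinV_eq; first by rewrite gt_eqF.
  rewrite (integral_assignment_plan mI plan_mu); congr (_%:E).
  by apply: eq_bigr => r _; rewrite mulrC.
Qed.

Lemma offer_profile_integral (R : realType) n (qv tv : 'I_n.+1 -> R)
    (I : set (measurableTypeR R)) (m : {measure set (measurableTypeR R) -> \bar R}) T :
  0 < total_flow qv -> m I = (total_flow qv)%:E -> offer_profile qv tv I m T ->
  (\int[m]_(i in I) (T i)%:E = (\sum_r qv r * tv r)%:E)%E.
Proof.
by move=> Q_gt0 mIE [_ [_]]; rewrite mIE /= => /mulEFinV_eq; apply; rewrite gt_eqF.
Qed.

Lemma feasible_ae_eq (R : realType) n (qv tv : 'I_n.+1 -> R)
    (I : set (measurableTypeR R)) (m : {measure set (measurableTypeR R) -> \bar R}) T T' :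
  {ae m, forall i, I i -> T' i = T i} ->
  feasible qv tv I m T' -> feasible qv tv I m T.
Proof.
move=> T'T [mu [plan_mu mu_T']]; exists mu; split=> //.
by apply: filterS2 T'T mu_T' => i T'Ti mu_T'i Ii; rewrite mu_T'i // T'Ti.
Qed.

Lemma uniform_assignment_plan (R : realType) n (qv : 'I_n.+1 -> R)
    (I : set (measurableTypeR R)) (m : {measure set (measurableTypeR R) -> \bar R}) :
  (forall r, 0 <= qv r) -> 0 < total_flow qv -> driver_space (total_flow qv) I m ->
  assignment_plan qv I m (fun _ r => qv r / total_flow qv).
Proof.
move=> q_ge0 Q_gt0 D; have mI := driver_space_measurable D.
split; [|split; [|split]].
- by move=> r; exact: measurable_cst.
- move=> _ _ r; apply/andP; split; first by rewrite divr_ge0 ?q_ge0 ?ltW.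
  by rewrite ler_pdivrMr // mul1r /total_flow (bigD1 r) //= lerDl sumr_ge0.
- by move=> r; rewrite integral_cst // D.2 -EFinM divfK // gt_eqF.
- by apply: aeW => _ _; rewrite -mulr_suml divff // gt_eqF.
Qed.

Lemma ord2_cases (r : 'I_2) : r = ord0 \/ r = ord_max.
Proof. by case: r => -[|[|//]] r_lt; [left|right]; apply: val_inj. Qed.

Lemma sum_ord2 (V : nmodType) (F : 'I_2 -> V) : \sum_(r < 2) F r = F ord0 + F ord_max.
Proof. by rewrite !big_ord_recr big_ord0 /= add0r; congr (F _ + _); apply: val_inj. Qed.

Lemma tmin_ord2 (R : realType) (t : 'I_2 -> R) : tmin t = Num.min (t ord0) (t ord_max).
Proof.
apply/le_anti/andP; split; first by rewrite le_min !tmin_le.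
apply: le_bigmin; first by rewrite ge_min lexx.
by move=> r _; case: (ord2_cases r) => ->; rewrite ge_min lexx ?orbT.
Qed.

Lemma tmax_ord2 (R : realType) (t : 'I_2 -> R) : tmax t = Num.max (t ord0) (t ord_max).
Proof.
apply/le_anti/andP; split; last by rewrite ge_max !le_tmax.
apply: bigmax_le; first by rewrite le_max lexx.
by move=> r _; case: (ord2_cases r) => ->; rewrite le_max lexx ?orbT.
Qed.

Definition clamp (R : realDomainType) (lo hi x : R) := Num.min (Num.max x lo) hi.

Lemma clamp_in (R : realDomainType) (lo hi x : R) :
  lo <= hi -> lo <= clamp lo hi x <= hi.
Proof. by move=> lohi; rewrite ge_min lexx orbT le_min lohi le_max lexx orbT. Qed.

Lemma clamp_id (R : realDomainType) (lo hi x : R) : lo <= x <= hi -> clamp lo hi x = x.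
Proof. by case/andP=> lox xhi; rewrite /clamp max_l // min_l. Qed.

Lemma measurable_clamp (R : realType) (D : set (measurableTypeR R)) f (lo hi : R) :
  measurable_fun D f -> measurable_fun D (fun x => clamp lo hi (f x)).
Proof.
move=> mf; apply: measurable_minr; last exact: measurable_cst.
by apply: measurable_maxr => //; exact: measurable_cst.
Qed.

Definition two_route_share (R : fieldType) (a b y : R) (r : 'I_2) : R :=
  if r == ord0 then (y - b) / (a - b) else (a - y) / (a - b).

Lemma two_route_share_swap (R : fieldType) (a b y : R) :
  two_route_share a b y ord_max = two_route_share b a y ord0.
Proof. by rewrite /two_route_share /= -mulrNN -invrN !opprB. Qed.

Lemma two_route_share0_ge0 (R : realFieldType) (a b y : R) :
  Num.min a b <= y <= Num.max a b -> 0 <= two_route_share a b y ord0.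
Proof.
rewrite /two_route_share /=.
case: (ltgtP a b) => [a_lt_b|b_lt_a|->]; last by rewrite subrr invr0 mulr0.
- by case/andP=> _ yb; rewrite -mulrNN -invrN divr_ge0 // oppr_ge0 ?subr_le0 // ltW.
- by case/andP=> b_le_y _; rewrite divr_ge0 // subr_ge0 // ltW.
Qed.

Lemma measurable_two_route_share (R : realType) (D : set (measurableTypeR R)) f (a b : R) r :
  measurable_fun D f -> measurable_fun D (fun x => two_route_share a b (f x) r).
Proof.
move=> mf; rewrite /two_route_share; case: (r == ord0).
all: by apply: measurable_funM; [apply: measurable_funB|exact: measurable_cst].
Qed.

Section TwoRouteShare.
Variables (R : realFieldType) (t : 'I_2 -> R).
Hypothesis t_neq : t ord0 != t ord_max.
Local Notation share := (two_route_share (t ord0) (t ord_max)).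

Let t_sub_neq0 : t ord0 - t ord_max != 0. Proof. by rewrite subr_eq0. Qed.

Lemma sum_two_route_share y : \sum_r share y r = 1.
Proof. by rewrite sum_ord2 /two_route_share /=; field. Qed.

Lemma two_route_share_comb y : \sum_r t r * share y r = y.
Proof. by rewrite sum_ord2 /two_route_share /=; field. Qed.

Lemma two_route_share_bounds y r :
  Num.min (t ord0) (t ord_max) <= y <= Num.max (t ord0) (t ord_max) ->
  0 <= share y r <= 1.
Proof.
move=> y_in; have share0_ge0 := two_route_share0_ge0 y_in.
have share1_ge0 : 0 <= share y ord_max.
  by rewrite two_route_share_swap two_route_share0_ge0 // minC maxC.
have := sum_two_route_share y; rewrite sum_ord2 => sum1.
by case: (ord2_cases r) => ->; apply/andP; split; lra.
Qed.

Lemma two_route_shareE (w : 'I_2 -> R) y :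
  \sum_r w r = 1 -> \sum_r t r * w r = y -> forall r, w r = share y r.
Proof.
rewrite !sum_ord2 => w_sum1 <- r.
have w1E : w ord_max = 1 - w ord0 by lra.
by rewrite /two_route_share; case: (ord2_cases r) => -> /=; rewrite !w1E; field.
Qed.

End TwoRouteShare.

Section TwoRoutes.
Context {R : realType} {qv tv : 'I_2 -> R} {I : set (measurableTypeR R)}
  {m : {measure set (measurableTypeR R) -> \bar R}}.
Local Notation share := (two_route_share (tv ord0) (tv ord_max)).

Lemma integral_two_route_share f r :
  tv ord0 != tv ord_max -> measurable I -> m I = (total_flow qv)%:E ->
  m.-integrable I (fun x => (f x)%:E) ->
  (\int[m]_(x in I) (f x)%:E = (\sum_r qv r * tv r)%:E)%E ->
  (\int[m]_(x in I) (share (f x) r)%:E = (qv r)%:E)%E.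
Proof.
move=> tv_neq mI mIE intf intfE.
have tv_sub_neq0 : tv ord0 - tv ord_max != 0 by rewrite subr_eq0.
pose c := (if r == ord0 then 1 else -1) / (tv ord0 - tv ord_max).
pose e := (if r == ord0 then - tv ord_max else tv ord0) / (tv ord0 - tv ord_max).
rewrite (eq_integral (fun x => (c * f x + e)%:E)) => [|x _]; last first.
  by congr (_%:E); rewrite /two_route_share /c /e; case: (r == ord0); field.
rewrite (integral_affine _ _ mI mIE intf intfE) /c /e /total_flow !sum_ord2.
by congr (_%:E); case: (ord2_cases r) => -> /=; field.
Qed.

Lemma two_route_share_plan T :
  tv ord0 != tv ord_max -> measurable I -> m I = (total_flow qv)%:E ->
  measurable_fun I T ->
  (forall x, I x -> Num.min (tv ord0) (tv ord_max) <= T x <= Num.max (tv ord0) (tv ord_max)) ->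
  (\int[m]_(x in I) (T x)%:E = (\sum_r qv r * tv r)%:E)%E ->
  assignment_plan qv I m (fun x => share (T x)).
Proof.
move=> tv_neq mI mIE mT T_in intTE.
have intT : m.-integrable I (fun x => (T x)%:E).
  by apply: bounded_integrable mT T_in => //; rewrite mIE ltry.
split; [|split; [|split]].
- by move=> r; exact: measurable_two_route_share.
- by move=> x Ix r; exact: two_route_share_bounds (T_in x Ix).
- by move=> r; exact: integral_two_route_share.
- by apply: aeW => x _; exact: sum_two_route_share.
Qed.

Lemma two_route_plan_shareE mu T :
  tv ord0 != tv ord_max -> assignment_plan qv I m mu -> induces tv I m mu T ->
  {ae m, forall i, I i -> forall r, mu i r = share (T i) r}.
Proof.
move=> tv_neq [_ [_ [_ mu_sum1]]] mu_T.
by apply: filterS2 mu_sum1 mu_T => i sum1 comb Ii; exact: two_route_shareE (sum1 Ii) (comb Ii).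
Qed.

Lemma two_route_plan_unique mu1 mu2 T :
  tv ord0 != tv ord_max ->
  assignment_plan qv I m mu1 -> induces tv I m mu1 T ->
  assignment_plan qv I m mu2 -> induces tv I m mu2 T ->
  {ae m, forall i, I i -> forall r, mu1 i r = mu2 i r}.
Proof.
move=> tv_neq plan1 mu1_T plan2 mu2_T.
apply: filterS2 (two_route_plan_shareE tv_neq plan1 mu1_T)
  (two_route_plan_shareE tv_neq plan2 mu2_T) => i mu1E mu2E Ii r.
by rewrite mu1E // mu2E.
Qed.

End TwoRoutes.

Lemma two_route_feasible (R : realType) (qv tv : 'I_2 -> R) (I : set (measurableTypeR R))
    (m : {measure set (measurableTypeR R) -> \bar R}) T :
  (forall r, 0 <= qv r) -> 0 < total_flow qv -> driver_space (total_flow qv) I m ->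
  offer_profile qv tv I m T -> feasible qv tv I m T.
Proof.
move=> q_ge0 Q_gt0 D offerT; have mI := driver_space_measurable D.
have [mT [T_range _]] := offerT; rewrite tmin_ord2 tmax_ord2 in T_range.
have [tv_eq|tv_neq] := eqVneq (tv ord0) (tv ord_max).
  exists (fun _ r => qv r / total_flow qv); split; first exact: uniform_assignment_plan.
  apply: filterS T_range => x T_in /T_in; rewrite -tv_eq minxx maxxx => /le_anti <-.
  rewrite sum_ord2 -tv_eq -mulrDr -mulrDl -sum_ord2 divff ?mulr1 //.
  exact: lt0r_neq0.
set lo := Num.min _ _ in T_range; set hi := Num.max _ _ in T_range.
have lo_le_hi : lo <= hi by rewrite ge_min !le_max lexx.
(* The range condition on [T] only holds almost everywhere, whereas a plan must
   take values in [0, 1] at every driver; clamping [T] fixes this on a null set. *)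
pose Tc x := clamp lo hi (T x).
have mTc : measurable_fun I Tc by exact: measurable_clamp.
have TcT : {ae m, forall x, I x -> Tc x = T x}.
  by apply: filterS T_range => x T_in Ix; exact: clamp_id (T_in Ix).
have intTcE : (\int[m]_(x in I) (Tc x)%:E = (\sum_r qv r * tv r)%:E)%E.
  rewrite -(offer_profile_integral Q_gt0 D.2 offerT).
  apply: ae_eq_integral => //; [exact/measurable_EFinP|exact/measurable_EFinP|].
  by apply: filterS TcT => x TcTx Ix; rewrite TcTx.
apply: (feasible_ae_eq TcT).
exists (fun x => two_route_share (tv ord0) (tv ord_max) (Tc x)); split.
  exact: two_route_share_plan tv_neq mI D.2 mTc (fun x _ => clamp_in (T x) lo_le_hi) intTcE.
by apply: aeW => x _; exact: two_route_share_comb.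
Qed.

Lemma counting_set1 (R : realType) (x : measurableTypeR R) :
  @counting (measurableTypeR R) R [set x] = 1%E.
Proof. by rewrite /counting asboolT ?finite_set1 // fset_set1 finmap.cardfs1. Qed.

Lemma integral_counting_set2 (R : realType) (x y : measurableTypeR R) (f : R -> R) :
  x != y ->
  (\int[@counting (measurableTypeR R) R]_(z in [set x] `|` [set y]) (f z)%:E
    = (f x + f y)%:E)%E.
Proof.
move=> xy; rewrite integral_setU //; last 2 first.
- move=> _ Y _; apply: countable_measurable => [t|]; first exact: measurable_set1.
  apply/finite_set_countable/(sub_finite_set (@subIsetl _ _ _)).
  by rewrite finite_setU; split; exact: finite_set1.
- by apply/disj_setPS => z [/= -> yx]; move: xy; rewrite yx eqxx.
rewrite EFinD; congr (_ + _)%E.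
- rewrite (eq_integral (cst (f x)%:E)) => [|z /set_mem /= ->] //.
  by rewrite integral_cst // [X in (_ * X)%E]counting_set1 mule1.
- rewrite (eq_integral (cst (f y)%:E)) => [|z /set_mem /= ->] //.
  by rewrite integral_cst // [X in (_ * X)%E]counting_set1 mule1.
Qed.

Lemma ae_atom d (T : measurableType d) (R : realType) (mu : {measure set T -> \bar R})
    (x : T) (P : T -> Prop) :
  measurable [set x] -> mu [set x] != 0%E -> {ae mu, forall y, P y} -> P x.
Proof.
move=> mx mx_neq0 [N [mN N0 notP_N]]; apply: contrapT => notPx.
have x_N : [set x] `<=` N by move=> _ ->; exact: notP_N.
by move: mx_neq0; rewrite (subset_measure0 mx mN x_N N0) eqxx.
Qed.

Lemma sum_ord3 (V : nmodType) (F : 'I_3 -> V) :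
  \sum_(r < 3) F r = F ord0 + F (inord 1) + F ord_max.
Proof.
rewrite !big_ord_recr big_ord0 /= add0r; congr (F _ + F _ + _).
all: by apply: val_inj; rewrite /= ?inordK.
Qed.

Section ThreeRouteExample.
Variable R : realType.

Definition middle_route_flows : 'I_3 -> R := fun r => if (r : nat) == 1%N then 2 else 0.

Definition three_route_times : 'I_3 -> R := fun r => (r : nat)%:R + 1.

Definition two_drivers : set (measurableTypeR R) := [set 1] `|` [set 2].

Definition extreme_offer (x : measurableTypeR R) : R := 2 * x - 1.

Lemma total_middle_route_flows : total_flow middle_route_flows = 2.
Proof. by rewrite /total_flow sum_ord3 /middle_route_flows inordK //= add0r addr0. Qed.

Lemma three_route_flows_times : flows_times middle_route_flows three_route_times.
Proof.
split; first by move=> r; rewrite /middle_route_flows; case: ifP.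
split; first by rewrite total_middle_route_flows.
by move=> r; rewrite /three_route_times ltr_pwDr.
Qed.

Lemma one_neq_two : (1 : measurableTypeR R) != 2.
Proof. by rewrite lt_eqF // ltr1n. Qed.

Lemma two_drivers_driver_space :
  driver_space (total_flow middle_route_flows) two_drivers counting.
Proof.
split; last first.
  rewrite total_middle_route_flows measureU //; last first.
    by apply/disj_set2P/disj_setPS => x [/= -> /eqP]; rewrite (negbTE one_neq_two).
  by rewrite [X in (X + _)%E]counting_set1 [X in (_ + X)%E]counting_set1.
right; exists 2%N; split=> //; apply/seteqP; split=> x /=.
- by case=> ->; [exists 1%N | exists 2%N].
- by move=> [k /andP[k_ge1 k_le2] <-]; case: k k_ge1 k_le2 => [|[|[|]]] //; [left|right].
Qed.

Lemma extreme_offer_profile :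
  offer_profile middle_route_flows three_route_times two_drivers counting extreme_offer.
Proof.
have [_ mass] := two_drivers_driver_space.
split; [|split].
- apply: measurable_funB; last exact: measurable_cst.
  by apply: measurable_funM; [exact: measurable_cst|exact: measurable_id].
- apply: aeW => x x_driver; apply/andP; split.
  + apply: le_trans (tmin_le _ ord0) _.
    by case: x_driver => ->; rewrite /three_route_times /extreme_offer /=; lra.
  + apply: le_trans (le_tmax _ ord_max).
    by case: x_driver => ->; rewrite /three_route_times /extreme_offer /=; lra.
- rewrite mass total_middle_route_flows /= integral_counting_set2 ?one_neq_two //.
  rewrite sum_ord3 /middle_route_flows /three_route_times /extreme_offer inordK //=.
  by congr (_%:E); lra.
Qed.

Lemma extreme_offer_infeasible :
  ~ feasible middle_route_flows three_route_times two_drivers counting extreme_offer.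
Proof.
move=> [mu [[_ [mu01 [mu_int mu_sum1]]] mu_T]].
have I1 : two_drivers 1 by left.
have I2 : two_drivers 2 by right.
have zero_flow_unused r : middle_route_flows r = 0 -> mu 1 r = 0.
  move=> flow0; have mu_sum0 : mu 1 r + mu 2 r = 0.
    by apply: EFin_inj; rewrite -flow0 -mu_int integral_counting_set2 ?one_neq_two.
  by have /andP[? ?] := mu01 _ I1 r; have /andP[? ?] := mu01 _ I2 r; lra.
have atom1 : @counting _ R [set (1 : measurableTypeR R)] != 0%E by rewrite counting_set1.
have := ae_atom (measurable_set1 _) atom1 mu_sum1 I1.
have := ae_atom (measurable_set1 _) atom1 mu_T I1.
rewrite !sum_ord3 (zero_flow_unused ord0) // (zero_flow_unused ord_max) //.
by rewrite /three_route_times /extreme_offer inordK //=; lra.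
Qed.

End ThreeRouteExample.

Theorem proposition1 (R : realType) :
  (* (i) any number of routes n+1 >= 1 *)
  (forall (n : nat) (qv tv : 'I_n.+1 -> R) (I : set (measurableTypeR R))
          (m : {measure set (measurableTypeR R) -> \bar R}),
     flows_times qv tv -> driver_space (total_flow qv) I m ->
     forall mu, assignment_plan qv I m mu ->
       offer_profile qv tv I m (fun i => \sum_(r < n.+1) tv r * mu i r))
  /\
  (* (ii) two routes *)
  (forall (qv tv : 'I_2 -> R) (I : set (measurableTypeR R))
          (m : {measure set (measurableTypeR R) -> \bar R}),
     flows_times qv tv -> driver_space (total_flow qv) I m ->
     forall T, offer_profile qv tv I m T ->
       feasible qv tv I m T /\
       (tv ord0 <> tv ord_max ->
        forall mu1 mu2,
          assignment_plan qv I m mu1 -> induces tv I m mu1 T ->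
          assignment_plan qv I m mu2 -> induces tv I m mu2 T ->
          {ae m, forall i, I i -> forall r, mu1 i r = mu2 i r}))
  /\
  (* (iii) three routes: some offer profile is not feasible *)
  (exists (qv tv : 'I_3 -> R) (I : set (measurableTypeR R))
          (m : {measure set (measurableTypeR R) -> \bar R}) T,
     flows_times qv tv /\ driver_space (total_flow qv) I m /\
     offer_profile qv tv I m T /\ ~ feasible qv tv I m T).
Proof.
split.
  by move=> n qv tv I m [_ [Q_gt0 _]] D mu; exact: assignment_plan_offer_profile.
split.
  move=> qv tv I m [q_ge0 [Q_gt0 _]] D T offerT.
  split; first exact: two_route_feasible.
  by move=> /eqP tv_neq mu1 mu2; exact: two_route_plan_unique.
exists (middle_route_flows R), (three_route_times R), (@two_drivers R), counting,
  (@extreme_offer R).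
split; first exact: three_route_flows_times.
split; first exact: two_drivers_driver_space.
split; [exact: extreme_offer_profile | exact: extreme_offer_infeasible].
Qed.
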